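(* Let $G$ be a graph with $n$ vertices and $\chi(G)>3$. Then $W(G)\le\min\{3\,\alpha(G),\ n-\alpha(G)\}+1$.
   Context: $\chi(G)$ is the chromatic number and $\alpha(G)$ the independence number (maximum size of a set of pairwise non-adjacent vertices) of $G$; $K_3$ is the complete graph on 3 vertices. Graphs are viewed as structures with an adjacency relation $E$ and equality. For a graph $G$ with $\chi(G)>3$, $W(G)$ is the least $k$ such that some existential-positive first-order sentence (built from atomic formulas $x=y$, $E(x,y)$ using only $\wedge$, $\vee$ and $\exists$) in which at most $k$ distinct variables occur is true in $G$ and false in $K_3$. Equivalently, $W(G)$ is the least $k$ such that for some $r$ Spoiler has a winning strategy in the $r$-round $k$-width 3-coloring game on $G$: in each round Spoiler may erase the colors of some colored vertices and then selects a vertex, which Duplicator colors red, blue or green; at most $k$ vertices may be colored after each round; Duplicator wins if after every round the partial coloring is proper (no two adjacent colored vertices have the same color). *)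

From mathcomp Require Import all_boot.
Set Implicit Arguments. Unset Strict Implicit. Unset Printing Implicit Defensive.

Record graph := Graph {
  vert :> finType;
  adj : rel vert;
  adj_sym : symmetric adj;
  adj_irr : irreflexive adj }.

Definition colorable (G : graph) (k : nat) : bool :=
  [exists f : {ffun G -> 'I_k}, [forall x, forall y, adj x y ==> (f x != f y)]].

Lemma colorable_exists (G : graph) : exists k, colorable G k.
Proof.
exists #|G|; apply/existsP; exists [ffun x => enum_rank x].
apply/forallP=> x; apply/forallP=> y; apply/implyP=> Hxy.
rewrite !ffunE; apply/negP=> /eqP /enum_rank_inj Exy.
by move: Hxy; rewrite Exy adj_irr.
Qed.

Definition chromatic_number (G : graph) : nat := ex_minn (colorable_exists G).

Definition independent (G : graph) (S : {set G}) : bool :=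
  [forall x in S, forall y in S, ~~ adj x y].

Definition independence_number (G : graph) : nat :=
  \max_(S : {set G} | independent S) #|S|.

(* Existential-positive first-order formulas over the signature {E}, with
   variables indexed by nat; atoms x = y and E(x,y); connectives /\, \/, exists. *)
Inductive epf : Type :=
  | EPEq  : nat -> nat -> epf
  | EPAdj : nat -> nat -> epf
  | EPAnd : epf -> epf -> epf
  | EPOr  : epf -> epf -> epf
  | EPEx  : nat -> epf -> epf.

Fixpoint ep_vars (f : epf) : seq nat :=
  match f with
  | EPEq i j | EPAdj i j => [:: i; j]
  | EPAnd f1 f2 | EPOr f1 f2 => ep_vars f1 ++ ep_vars f2
  | EPEx i f1 => i :: ep_vars f1
  end.

Definition ep_nvars (f : epf) : nat := size (undup (ep_vars f)).

Fixpoint ep_free (f : epf) : seq nat :=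
  match f with
  | EPEq i j | EPAdj i j => [:: i; j]
  | EPAnd f1 f2 | EPOr f1 f2 => ep_free f1 ++ ep_free f2
  | EPEx i f1 => filter (fun j => j != i) (ep_free f1)
  end.

Definition ep_sentence (f : epf) : bool := nilp (ep_free f).

Definition upd (T : Type) (env : nat -> T) (i : nat) (a : T) : nat -> T :=
  fun j => if j == i then a else env j.

Fixpoint ep_sat (T : Type) (R : T -> T -> bool) (env : nat -> T) (f : epf) : Prop :=
  match f with
  | EPEq i j => env i = env j
  | EPAdj i j => R (env i) (env j)
  | EPAnd f1 f2 => ep_sat R env f1 /\ ep_sat R env f2
  | EPOr f1 f2 => ep_sat R env f1 \/ ep_sat R env f2
  | EPEx i f1 => exists a : T, ep_sat R (upd env i a) f1
  end.

Definition K3_adj : rel 'I_3 := fun x y => x != y.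

(* Some EP sentence with at most k distinct variables is true in G and false in K3;
   W(G) is the least k for which this holds. *)
Definition W_witness (G : graph) (k : nat) : Prop :=
  exists phi : epf,
    [/\ ep_sentence phi, ep_nvars phi <= k,
        (forall env : nat -> G, ep_sat (@adj G) env phi) &
        (forall env : nat -> 'I_3, ~ ep_sat K3_adj env phi)].

From mathcomp Require Import all_boot.
From mathcomp Require Import zify.

Set Implicit Arguments. Unset Strict Implicit. Unset Printing Implicit Defensive.

(* For a vertex set X of G, let Phi_X be the sentence
     exists (x_u)_(u in X),  /\_{u v in X, u ~ v} E(x_u, x_v)
                          /\ /\_{v notin X} exists z. /\_{u in X, v ~ u} E(z, x_u),
   which uses the |X| variables x_u and one spare variable z.  It holds in G
   (take x_u := u and z := v), and a model of it in K3 is a map X -> K3 which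
   is proper on G[X] and leaves a free colour for every v outside X: that is, a
   3-colouring of G proper on every edge meeting X.  Hence if no such
   colouring exists, Phi_X witnesses W(G) <= |X| + 1.  Two choices of X do so:
   - X = V \ I for a maximum independent set I: a colouring proper on the
     edges meeting X is proper everywhere, contradicting chi(G) > 3;
   - any X with |X| = 3 alpha(G) < n: adding one vertex v outside X gives
     3 alpha(G) + 1 vertices properly 3-coloured, more than 3 independent
     sets can cover. *)

Definition ep_true : epf := EPEx 0 (EPEq 0 0).

Definition ep_all (A : Type) (s : seq A) (F : A -> epf) : epf :=
  foldr (fun a f => EPAnd (F a) f) ep_true s.

Definition ep_exs (vars : seq nat) (f : epf) : epf := foldr EPEx f vars.

Lemma ep_sat_ext (T : Type) (R : T -> T -> bool) (f : epf) (env1 env2 : nat -> T) :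
  env1 =1 env2 -> ep_sat R env1 f -> ep_sat R env2 f.
Proof.
elim: f env1 env2 => [i j|i j|f1 IH1 f2 IH2|f1 IH1 f2 IH2|i f IH] env1 env2 E /=.
- by rewrite !E.
- by rewrite !E.
- by case=> /(IH1 _ _ E) H1 /(IH2 _ _ E).
- by case=> [/(IH1 _ _ E)|/(IH2 _ _ E)]; [left|right].
- case=> a Ha; exists a; apply: IH Ha => j.
  by rewrite /upd; case: (j == i).
Qed.

Lemma sat_ep_true (T : Type) (R : T -> T -> bool) (env : nat -> T) :
  ep_sat R env ep_true.
Proof. by exists (env 0). Qed.

Lemma sat_ep_all (T : Type) (R : T -> T -> bool) (env : nat -> T)
    (A : eqType) (s : seq A) (F : A -> epf) :
  ep_sat R env (ep_all s F) <-> (forall a, a \in s -> ep_sat R env (F a)).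
Proof.
elim: s => [|x s IH] /=; first by split=> // _; apply: sat_ep_true.
split=> [[Hx /IH Hs] a|H].
  by rewrite inE => /predU1P [->|/Hs].
by split; [apply: H; rewrite mem_head | apply/IH => a Ha; apply: H; rewrite inE Ha orbT].
Qed.

Lemma sat_ep_exs (T : Type) (R : T -> T -> bool) (vars : seq nat) (f : epf)
    (a env : nat -> T) :
  ep_sat R (fun j => if j \in vars then a j else env j) f ->
  ep_sat R env (ep_exs vars f).
Proof.
elim: vars env => [|i vars IH] env /= H; first exact: ep_sat_ext H.
exists (a i); apply: IH; apply: ep_sat_ext H => j; rewrite /upd inE.
by case: eqP => [->|_] /=; case: (_ \in vars).
Qed.

Lemma sat_ep_exs_inv (T : Type) (R : T -> T -> bool) (vars : seq nat) (f : epf)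
    (env : nat -> T) :
  ep_sat R env (ep_exs vars f) -> exists env', ep_sat R env' f.
Proof.
by elim: vars env => [|i vars IH] env /=; [exists env | case=> a /IH].
Qed.

Lemma free_ep_all (A : eqType) (s : seq A) (F : A -> epf) (L : seq nat) :
  (forall a, a \in s -> {subset ep_free (F a) <= L}) ->
  {subset ep_free (ep_all s F) <= L}.
Proof.
elim: s => [|x s IH] //= H j; rewrite mem_cat => /orP [|].
  by apply: H; rewrite mem_head.
by apply: IH => a Ha; apply: H; rewrite inE Ha orbT.
Qed.

Lemma vars_ep_all (A : eqType) (s : seq A) (F : A -> epf) (L : seq nat) :
  0 \in L -> (forall a, a \in s -> {subset ep_vars (F a) <= L}) ->
  {subset ep_vars (ep_all s F) <= L}.
Proof.
move=> L0; elim: s => [|x s IH] /= H j.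
  by rewrite !inE => /or3P [] /eqP ->.
rewrite mem_cat => /orP [|].
  by apply: H; rewrite mem_head.
by apply: IH => a Ha; apply: H; rewrite inE Ha orbT.
Qed.

Lemma ep_sentence_exs (vars : seq nat) (f : epf) :
  {subset ep_free f <= vars} -> ep_sentence (ep_exs vars f).
Proof.
have free_exs L : {subset ep_free f <= vars ++ L} -> {subset ep_free (ep_exs vars f) <= L}.
  elim: vars L => [|i vars IH] L /= Hf j; first exact: Hf.
  rewrite mem_filter => /andP [ji Hj].
  suff : j \in i :: L by rewrite inE (negbTE ji).
  apply: IH Hj => k /Hf; rewrite !(mem_cat, inE).
  by case: (k == i); case: (k \in vars).
move=> Hf; rewrite /ep_sentence.
have := free_exs [::]; rewrite cats0 => /(_ Hf).
by case: (ep_free _) => // j s /(_ j (mem_head _ _)).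
Qed.

Lemma vars_ep_exs (vars : seq nat) (f : epf) (L : seq nat) :
  {subset vars <= L} -> {subset ep_vars f <= L} -> {subset ep_vars (ep_exs vars f) <= L}.
Proof.
elim: vars => [|i vars IH] /= Hvars Hf j; first exact: Hf.
rewrite inE => /predU1P [->|]; first by apply: Hvars; rewrite mem_head.
by apply: IH => // k Hk; apply: Hvars; rewrite inE Hk orbT.
Qed.

Lemma ep_nvars_le (f : epf) (L : seq nat) :
  {subset ep_vars f <= L} -> ep_nvars f <= size L.
Proof.
by move=> HL; apply: uniq_leq_size (undup_uniq _) _ => j; rewrite mem_undup => /HL.
Qed.

Lemma chromatic_number_le (G : graph) (k : nat) : colorable G k -> chromatic_number G <= k.
Proof. by rewrite /chromatic_number => Hk; case: ex_minnP => m _ /(_ _ Hk). Qed.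

Lemma independent_card_le (G : graph) (S : {set G}) :
  independent S -> #|S| <= independence_number G.
Proof. exact: leq_bigmax_cond. Qed.

Lemma maximum_independent (G : graph) :
  exists2 I : {set G}, independent I & #|I| = independence_number G.
Proof.
have indep0 : independent (set0 : {set G}) by apply/forallP => x; rewrite inE.
rewrite /independence_number (bigmax_eq_arg _ indep0).
by case: arg_maxnP => // I HI _; exists I.
Qed.

(* A vertex set properly coloured with k colours has at most k alpha(G)
   vertices: each colour class is independent. *)
Lemma coloured_set_card (G : graph) (k : nat) (Y : {set G}) (c : G -> 'I_k) :
  (forall x y, x \in Y -> y \in Y -> adj x y -> c x != c y) ->
  #|Y| <= k * independence_number G.
Proof.
move=> Hc; have class_indep i : independent [set y in Y | c y == i].
  apply/forallP => x; apply/implyP; rewrite inE => /andP [Hx /eqP cx].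
  apply/forallP => y; apply/implyP; rewrite inE => /andP [Hy /eqP cy].
  by apply/negP => /(Hc x y Hx Hy); rewrite cx cy eqxx.
rewrite -sum1_card (partition_big c predT) //= -[k in k * _]card_ord -sum_nat_const.
apply: leq_sum => i _; apply: leq_trans (independent_card_le (class_indep i)).
by rewrite -sum1_card; apply: eq_leq; apply: eq_bigl => y; rewrite inE.
Qed.

Lemma set_of_card (T : finType) (m : nat) : m <= #|T| -> exists X : {set T}, #|X| = m.
Proof.
move=> Hm; exists [set x in take m (enum T)].
rewrite cardsE (card_uniqP (take_uniq _ (enum_uniq _))).
by rewrite size_takel // -cardE.
Qed.

Section ObstructionSentence.
Variable G : graph.

Definition colorable_near (X : {set G}) : Prop :=
  exists c : G -> 'I_3, forall x y, x \in X -> adj x y -> c x != c y.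

(* Variable  idx u  names vertex u; variable 0 is the spare variable z. *)
Definition idx (u : G) : nat := (enum_rank u).+1.

Lemma idx_inj : injective idx.
Proof. by move=> u v [] /val_inj /enum_rank_inj. Qed.

Variable X : {set G}.

Definition X_vars : seq nat := map idx (enum X).

Definition edges_in_X : epf :=
  ep_all (enum [set p : G * G | [&& p.1 \in X, p.2 \in X & adj p.1 p.2]])
         (fun p => EPAdj (idx p.1) (idx p.2)).

Definition free_colour (v : G) : epf :=
  EPEx 0 (ep_all (enum [set u in X | adj v u]) (fun u => EPAdj 0 (idx u))).

Definition obstruction_matrix : epf :=
  EPAnd edges_in_X (ep_all (enum (~: X)) free_colour).

Definition obstruction : epf := ep_exs X_vars obstruction_matrix.

Lemma obstruction_sentence : ep_sentence obstruction.
Proof.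
apply: ep_sentence_exs => j /=; rewrite mem_cat => /orP [|].
  apply: free_ep_all => p; rewrite mem_enum inE => /and3P [p1 p2 _] i.
  by rewrite !inE => /predU1P [->|/eqP ->]; apply: map_f; rewrite mem_enum.
apply: free_ep_all => v _ i /=; rewrite mem_filter => /andP [i0].
have : {subset ep_free (ep_all (enum [set u in X | adj v u]) (fun u => EPAdj 0 (idx u)))
          <= 0 :: X_vars}.
  apply: free_ep_all => u; rewrite mem_enum inE => /andP [uX _] l.
  by rewrite !inE => /predU1P [->|/eqP ->]; rewrite ?eqxx // map_f ?orbT ?mem_enum.
by move=> Hsub /Hsub; rewrite inE (negbTE i0).
Qed.

Lemma obstruction_nvars : ep_nvars obstruction <= #|X| + 1.
Proof.
have zero_in : 0 \in 0 :: X_vars by rewrite mem_head.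
have X_in u : u \in X -> idx u \in 0 :: X_vars.
  by move=> uX; rewrite inE map_f ?orbT ?mem_enum.
rewrite -addn1 addnC (cardE X) -(size_map idx) -/X_vars.
apply: (ep_nvars_le (L := 0 :: X_vars)); apply: vars_ep_exs.
  by move=> j Hj; rewrite inE Hj orbT.
move=> j /=; rewrite mem_cat => /orP [|].
  apply: vars_ep_all => // p; rewrite mem_enum inE => /and3P [p1 p2 _] i.
  by rewrite !inE => /predU1P [->|/eqP ->]; apply: X_in.
apply: vars_ep_all => // v _ i; rewrite inE => /predU1P [-> //|].
apply: vars_ep_all => // u; rewrite mem_enum inE => /andP [uX _] l.
by rewrite !inE => /predU1P [->|/eqP ->] //; apply: X_in.
Qed.

(* Phi_X holds in G: interpret x_u by u and, for v outside X, z by v. *)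
Lemma obstruction_sat_G (env : nat -> G) : ep_sat (@adj G) env obstruction.
Proof.
pose a j := if [pick u | idx u == j] is Some u then u else env j.
have a_idx u : a (idx u) = u.
  by rewrite /a; case: pickP => [w /eqP /idx_inj //|/(_ u)]; rewrite eqxx.
have X_idx u : u \in X -> idx u \in X_vars by move=> uX; rewrite map_f ?mem_enum.
apply: (sat_ep_exs (a := a)); split.
  apply/sat_ep_all => p; rewrite mem_enum inE => /and3P [p1 p2 p12] /=.
  by rewrite !X_idx // !a_idx.
apply/sat_ep_all => v _; exists v; apply/sat_ep_all => u.
by rewrite mem_enum inE => /andP [uX vu] /=; rewrite /upd eqxx X_idx // a_idx.
Qed.

Lemma obstruction_sat_K3 (env : nat -> 'I_3) :
  ep_sat K3_adj env obstruction -> colorable_near X.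
Proof.
move/sat_ep_exs_inv => [env' [/sat_ep_all edges /sat_ep_all frees]].
pose c x := if x \in X then env' (idx x)
  else odflt ord0 [pick a : 'I_3 | [forall u in X, adj x u ==> (a != env' (idx u))]].
exists c => x y xX xy; rewrite /c xX.
case: ifP => yX.
  by have := edges (x, y); rewrite mem_enum inE xX yX xy => /(_ isT).
case: pickP => [a /forallP /(_ x)|none].
  by rewrite xX adj_sym xy /= eq_sym.
have [a Ha] : ep_sat K3_adj env' (free_colour y) by apply: frees; rewrite mem_enum inE yX.
move: (none a) => /negbT/negP; case; apply/forallP => u; apply/implyP => uX.
apply/implyP => yu; move/sat_ep_all: Ha => /(_ u).
by rewrite mem_enum inE uX yu /= /K3_adj /upd eqxx => /(_ isT).
Qed.

Lemma witness_of_obstruction : ~ colorable_near X -> W_witness G (#|X| + 1).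
Proof.
move=> Hnear; exists obstruction; split.
- exact: obstruction_sentence.
- exact: obstruction_nvars.
- exact: obstruction_sat_G.
- by move=> env /obstruction_sat_K3.
Qed.

End ObstructionSentence.

Lemma near_complement_colorable (G : graph) (I : {set G}) :
  independent I -> colorable_near (~: I) -> colorable G 3.
Proof.
move=> HI [c Hc]; apply/existsP; exists [ffun x => c x].
apply/forallP => x; apply/forallP => y; apply/implyP => xy; rewrite !ffunE.
case xI: (x \in I); last by apply: Hc; rewrite // inE xI.
case yI: (y \in I); last by rewrite eq_sym; apply: Hc; rewrite ?inE ?yI // adj_sym.
by move/forallP: HI => /(_ x); rewrite xI => /forallP /(_ y); rewrite yI xy.
Qed.

(* Case 3 alpha < n - alpha: a colouring near X, with some v outside X, is
   proper on X plus v, so |X| + 1 <= 3 alpha. *)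
Lemma near_colorable_card (G : graph) (X : {set G}) (v : G) :
  v \notin X -> colorable_near X -> #|X| < 3 * independence_number G.
Proof.
move=> vX [c Hc]; suff : #|v |: X| <= 3 * independence_number G by rewrite cardsU1 vX.
apply: (coloured_set_card (c := c)) => x y; rewrite !inE.
case: (boolP (x \in X)) => [xX _ _ /(Hc _ _ xX) //|_]; rewrite orbF => /eqP ->.
case: (boolP (y \in X)) => [yX _ vy|_]; first by rewrite eq_sym Hc // adj_sym.
by rewrite orbF => /eqP ->; rewrite adj_irr.
Qed.

(* W(G) <= m  is expressed as: some k <= m has the defining property of W(G)
   (W(G) being the least such k). *)
Theorem theorem2 (G : graph) (hchi : 3 < chromatic_number G) :
  exists k, k <= minn (3 * independence_number G) (#|G| - independence_number G) + 1
            /\ W_witness G k.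
Proof.
have [I indepI cardI] := maximum_independent G.
case: (leqP (#|G| - independence_number G) (3 * independence_number G)) => Hmin.
  exists (#|~: I| + 1); split.
    by have := cardsC I; rewrite cardI; lia.
  apply: witness_of_obstruction => /(near_complement_colorable indepI).
  by move/chromatic_number_le; rewrite leqNgt hchi.
have [X cardX] : exists X : {set G}, #|X| = 3 * independence_number G.
  by apply: set_of_card; lia.
have [v vX] : exists v, v \notin X.
  have : 0 < #|~: X| by rewrite cardsCs setCK; lia.
  by case/card_gt0P => v; rewrite inE; exists v.
exists (#|X| + 1); split; first by lia.
by apply: witness_of_obstruction => /(near_colorable_card vX); rewrite cardX ltnn.
Qed.
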